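(* For each $w\in\{1,2,3,4,5\}$, the function $z\mapsto g_w(e^z)$ is concave on the interval $\big[\ln(1-(1/2)^w),0\big]$.
   Context: $h(t)=(1-t)\left[\psi-\left(\frac{t}{1-t}\right)^{\chi}\right]$ with $\psi=13/10$, $\chi=1/2$, and for a positive integer $w$, $g_w(y)=\frac{1-y}{y}\,h\big((1-y)^{1/w}\big)$. *)

From HB Require Import structures.
From mathcomp Require Import all_boot all_order all_algebra.
From mathcomp Require Import all_classical all_reals all_analysis.
Set Implicit Arguments. Unset Strict Implicit. Unset Printing Implicit Defensive.
Import Order.TTheory GRing.Theory Num.Theory.
Local Open Scope ring_scope.

Definition psi {R : realType} : R := 13%:R / 10%:R.
Definition chi {R : realType} : R := 1 / 2%:R.

Definition h {R : realType} (t : R) : R :=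
  (1 - t) * (psi - (t / (1 - t)) `^ chi).

Definition g {R : realType} (w : nat) (y : R) : R :=
  (1 - y) / y * h ((1 - y) `^ (1 / w%:R)).

Definition concave_on {R : realType} (f : R -> R) (a b : R) : Prop :=
  forall x y l : R, a <= x <= b -> a <= y <= b -> 0 <= l <= 1 ->
    l * f x + (1 - l) * f y <= f (l * x + (1 - l) * y).

(* Write F(z) = g_w(e^z) and put t = (1 - e^z)^(1/w) and s = (t/(1-t))^(1/2),
   the two quantities inside h.  Then t = s^2/(1+s^2) and
   e^z = ((1+s^2)^w - s^(2w)) / (1+s^2)^w, so F'(z) is a rational function
   [slope w s] of s.  As z increases on [ln(1 - 2^-w), 0), s decreases inside
   [0, 1]; for w <= 5 the numerator of the derivative of [slope w] is a
   polynomial that is nonnegative on [0, 1], so [slope w] is nondecreasing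
   there.  Hence F' is nonincreasing and F, which is continuous up to z = 0,
   is concave by the mean value theorem. *)

From mathcomp Require Import all_boot all_order all_algebra.
From mathcomp Require Import all_classical all_reals all_analysis.
From mathcomp Require Import ring lra.
Import Order.TTheory GRing.Theory Num.Theory.
Import numFieldNormedType.Exports.
Local Open Scope ring_scope.
Local Open Scope classical_set_scope.
Set Implicit Arguments.
Unset Strict Implicit.

Section DeriveRules.
Variable R : realType.
Implicit Types (f g : R -> R) (x a b : R).

Lemma is_derive1_cst (c x : R) : is_derive x 1 (fun=> c) 0.
Proof. exact: is_derive_cst. Qed.

Lemma is_derive1_id x : is_derive x 1 id 1.
Proof. exact: is_derive_id. Qed.

Lemma is_derive1D f g x a b : is_derive x 1 f a -> is_derive x 1 g b ->
  is_derive x 1 (fun t => f t + g t) (a + b).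
Proof. exact: is_deriveD. Qed.

Lemma is_derive1B f g x a b : is_derive x 1 f a -> is_derive x 1 g b ->
  is_derive x 1 (fun t => f t - g t) (a - b).
Proof. exact: is_deriveB. Qed.

Lemma is_derive1M f g x a b : is_derive x 1 f a -> is_derive x 1 g b ->
  is_derive x 1 (fun t => f t * g t) (f x * b + g x * a).
Proof. exact: is_deriveM. Qed.

Lemma is_derive1X f x a n : is_derive x 1 f a ->
  is_derive x 1 (fun t => f t ^+ n) (n%:R * f x ^+ n.-1 * a).
Proof.
move=> fa; have := is_deriveX n fa.
by rewrite (_ : f ^+ n = fun t => f t ^+ n) //; apply/funext => t; rewrite exprfctE.
Qed.

Lemma is_derive1V f x a : is_derive x 1 f a -> f x != 0 ->
  is_derive x 1 (fun t => (f t)^-1) (- a / f x ^+ 2).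
Proof.
move=> fa fx0; apply: is_derive_eq (is_deriveV fx0 fa) _.
by rewrite /GRing.scale /= mulNr mulrC mulNr.
Qed.

Lemma is_derive1_comp_powR f x a r : is_derive x 1 f a -> 0 < f x ->
  is_derive x 1 (fun t => f t `^ r) (r * f x `^ (r - 1) * a).
Proof. by move=> fa fx0; exact: (is_derive1_comp (is_derive1_powR r fx0) fa). Qed.

End DeriveRules.

Section ConcaveCriterion.
Variables (R : realType) (f df : R -> R) (a b : R).
Hypothesis f_derive : forall x, x \in `]a, b[%R -> is_derive x 1 f (df x).
Hypothesis df_nonincr : {in `]a, b[%R &, {homo df : x y /~ x <= y}}.
Hypothesis f_cont : {within `[a, b], continuous f}.

Lemma nonincr_deriv_slopes x p y : a <= x -> x < p -> p < y -> y <= b ->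
  (f y - f p) * (p - x) <= (f p - f x) * (y - p).
Proof.
move=> ax xp py yb.
have der c d : a <= c -> d <= b -> forall e, e \in `]c, d[%R -> is_derive e 1 f (df e).
  by move=> ac db e; rewrite !in_itv /= => ?; apply: f_derive; rewrite in_itv /=; lra.
have cont c d : a <= c -> d <= b -> {within `[c, d], continuous f}.
  by move=> ac db; apply: continuous_subspaceW f_cont; apply: subset_itv; rewrite bnd_simp.
have pb : p <= b by lra.
have ap : a <= p by lra.
have [c1 + ->] := MVT xp (der _ _ ax pb) (cont _ _ ax pb).
have [c2 + ->] := MVT py (der _ _ ap yb) (cont _ _ ap yb).
rewrite !in_itv /= => /andP[pc2 c2y] /andP[xc1 c1p].
have dfc : df c2 <= df c1 by apply: df_nonincr; rewrite ?in_itv /=; lra.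
by rewrite mulrAC !ler_pM2r ?subr_gt0.
Qed.

Lemma concave_on_nonincr_deriv : concave_on f a b.
Proof.
move=> x y l; wlog xy : x y l / x <= y.
  move=> wlog_xy hx hy hl; have [xy|/ltW yx] := leP x y; first exact: wlog_xy.
  have := wlog_xy y x (1 - l) yx hy hx.
  by rewrite subKr [l * x + _]addrC [l * f x + _]addrC; apply; lra.
move=> /andP[ax xb] /andP[ay yb] /andP[l0 l1].
have [<-|xy'] := eqVneq x y; first by rewrite -!mulrDl subrKC !mul1r.
have [->|l0'] := eqVneq l 0; first by rewrite !(mul0r, subr0, mul1r, add0r).
have [->|l1'] := eqVneq l 1; first by rewrite subrr !(mul0r, addr0, mul1r).
set p := l * x + (1 - l) * y.
have xp : x < p by rewrite /p; nra.
have py : p < y by rewrite /p; nra.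
have := nonincr_deriv_slopes ax xp py yb.
have -> : p - x = (1 - l) * (y - x) by rewrite /p; ring.
have -> : y - p = l * (y - x) by rewrite /p; ring.
rewrite !mulrA ler_pM2r ?subr_gt0; lra.
Qed.
End ConcaveCriterion.

Section Slope.
Variable R : realType.
Implicit Types x : R.

Definition pow_gap (k : nat) x : R := (1 + x ^+ 2) ^+ k - (x ^+ 2) ^+ k.

Lemma is_derive_pow_gap k x :
  is_derive x 1 (pow_gap k) (2 * k%:R * x * pow_gap k.-1 x).
Proof.
have dsq := is_derive1X 2 (is_derive1_id x).
apply: is_derive_eq (is_derive1B (is_derive1X k (is_derive1D (is_derive1_cst 1 x) dsq))
                                 (is_derive1X k dsq)) _.
by rewrite /pow_gap /=; ring.
Qed.

Lemma pow_gap_gt0 k x : (0 < k)%N -> 0 < pow_gap k x.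
Proof.
move=> k0; rewrite subr_gt0 ltrXn2r -?lt0n ?sqr_ge0 //.
by rewrite ltrDr ltr01.
Qed.

Definition slope_den w x : R := (1 + x ^+ 2) * pow_gap w x.

Definition slope_num w x : R :=
  (- (2 * w%:R * psi) + (2 * w%:R + 1) * x) * slope_den w x
  + 2 * x ^+ 2 * (psi - x) * (pow_gap w x + w%:R * (1 + x ^+ 2) * pow_gap w.-1 x).

Definition slope w x : R := slope_num w x / (2 * w%:R * slope_den w x).

Definition dslope_den w x : R :=
  2 * x * pow_gap w x + (1 + x ^+ 2) * (2 * w%:R * x * pow_gap w.-1 x).

Definition dslope_num w x : R :=
  (2 * w%:R + 1) * slope_den w x
  + (- (2 * w%:R * psi) + (2 * w%:R + 1) * x) * dslope_den w x
  + (4 * x * (psi - x) - 2 * x ^+ 2) * (pow_gap w x + w%:R * (1 + x ^+ 2) * pow_gap w.-1 x)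
  + 2 * x ^+ 2 * (psi - x) * (2 * w%:R * x * pow_gap w.-1 x
      + w%:R * (2 * x * pow_gap w.-1 x + (1 + x ^+ 2) * (2 * w.-1%:R * x * pow_gap w.-2 x))).

Lemma is_derive_slope_den w x : is_derive x 1 (slope_den w) (dslope_den w x).
Proof.
apply: is_derive_eq (is_derive1M (is_derive1D (is_derive1_cst 1 x) (is_derive1X 2 (is_derive1_id x)))
                                 (is_derive_pow_gap w x)) _.
by rewrite /dslope_den /=; ring.
Qed.

Lemma is_derive_slope_num w x : is_derive x 1 (slope_num w) (dslope_num w x).
Proof.
have dA := is_derive1D (is_derive1_cst 1 x) (is_derive1X 2 (is_derive1_id x)).
have dlin := is_derive1D (is_derive1_cst (- (2 * w%:R * psi)) x)
  (is_derive1M (is_derive1_cst (2 * w%:R + 1) x) (is_derive1_id x)).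
have dquad := is_derive1M (is_derive1M (is_derive1_cst 2 x) (is_derive1X 2 (is_derive1_id x)))
  (is_derive1B (is_derive1_cst psi x) (is_derive1_id x)).
have dsum := is_derive1D (is_derive_pow_gap w x)
  (is_derive1M (is_derive1M (is_derive1_cst w%:R x) dA) (is_derive_pow_gap w.-1 x)).
apply: is_derive_eq (is_derive1D (is_derive1M dlin (is_derive_slope_den w x))
  (is_derive1M dquad dsum)) _.
by rewrite /dslope_num /=; ring.
Qed.

(* For each w <= 5 this is an explicit polynomial in x; its only negative
   coefficients sit at x^(2k) and are dominated by those of x^(2k-1). *)
Lemma slope_deriv_num_ge0 w x : (1 <= w <= 5)%N -> 0 <= x <= 1 ->
  0 <= dslope_num w x * slope_den w x - slope_num w x * dslope_den w x.
Proof.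
move=> /andP[w1 w5] /andP[x0 x1].
have m k : 0 <= x ^+ k by exact: exprn_ge0.
have a k : x ^+ k.+1 <= x ^+ k by rewrite exprSr ler_piMr.
move: (a 7%N) (a 9%N) (a 11%N) (a 13%N) (a 15%N).
move: (m 1%N) (m 2%N) (m 3%N) (m 4%N) (m 5%N) (m 6%N) (m 7%N) (m 8%N) (m 9%N) (m 10%N).
move: (m 11%N) (m 12%N) (m 13%N) (m 14%N) (m 15%N) (m 16%N) (m 17%N) (m 20%N).
rewrite /dslope_num /slope_num /dslope_den /slope_den /pow_gap /psi.
by case: w w1 w5 => [|[|[|[|[|[|w]]]]]] //= _ _; lra.
Qed.

Lemma slope_den_gt0 w x : (0 < w)%N -> 0 < slope_den w x.
Proof. by move=> w0; rewrite mulr_gt0 ?pow_gap_gt0 // ltr_pwDl ?sqr_ge0. Qed.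

Lemma is_derive_slope w x : (0 < w)%N -> is_derive x 1 (slope w)
  ((dslope_num w x * slope_den w x - slope_num w x * dslope_den w x)
   / (2 * w%:R * slope_den w x ^+ 2)).
Proof.
move=> w0; have D0 := slope_den_gt0 x w0.
have c0 : 0 < 2 * w%:R :> R by rewrite mulr_gt0 // ltr0n.
have dD := is_derive1M (is_derive1_cst (2 * w%:R) x) (is_derive_slope_den w x).
apply: is_derive_eq (is_derive1M (is_derive_slope_num w x)
  (is_derive1V dD (lt0r_neq0 (mulr_gt0 c0 D0)))) _.
by rewrite /=; field; rewrite gt_eqF // pnatr_eq0 -lt0n.
Qed.

Lemma slope_nondecr w : (1 <= w <= 5)%N ->
  {in `[0, 1]%R &, {homo slope w : s t / s <= t}}.
Proof.
move=> w15; have w0 : (0 < w)%N by case/andP: w15.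
have der x : x \in `]0, 1[%R -> derivable (slope w) x 1.
  by move=> _; case: (is_derive_slope x w0).
have der_ge0 x : x \in `]0, 1[%R -> 0 <= (slope w)^`()%classic x.
  rewrite in_itv /= => /andP[x0 x1].
  rewrite derive1E; have [_ ->] := is_derive_slope x w0.
  apply: divr_ge0; first by apply: slope_deriv_num_ge0; rewrite ?ltW.
  by rewrite mulr_ge0 ?sqr_ge0 // mulr_ge0 ?ler0n.
have cont : {within `[0, 1], continuous (slope w)}.
  apply/continuous_subspaceT => x; have [dx _] := is_derive_slope x w0.
  exact/differentiable_continuous/derivable1_diffP.
move=> s t; rewrite !in_itv /= => /andP[s0 _] /andP[_ t1] st.
exact: (ger0_derive1_ndecr der der_ge0 cont s0 st t1).
Qed.
End Slope.

Section GExpR.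
Variable R : realType.
Implicit Types z : R.

Definition t_of w z : R := (1 - expR z) `^ (1 / w%:R).
Definition s_of w z : R := (t_of w z / (1 - t_of w z)) `^ chi.

Lemma chi_ge0 : 0 <= chi :> R.
Proof. by rewrite /chi divr_ge0. Qed.

Lemma half_expn_gt0_lt1 w : (0 < w)%N -> 0 < (1 / 2%:R : R) ^+ w < 1.
Proof. by move=> w0; rewrite exprn_gt0 // exprn_ilt1 -?lt0n // ltr_pdivrMr ?mul1r ?ltr1n. Qed.

Lemma ln_one_sub_half_expn_lt0 w : (0 < w)%N -> ln (1 - (1 / 2%:R) ^+ w) < 0 :> R.
Proof. by move=> w0; have /andP[h0 h1] := half_expn_gt0_lt1 w0; apply: ln_lt0; lra. Qed.

Lemma powRB1 (x r : R) : 0 < x -> x `^ (r - 1) = x `^ r / x.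
Proof. by move=> x0; rewrite powRB ?powRr1 ?ltW //; apply/implyP => _; rewrite gt_eqF. Qed.

Lemma t_of_gt0 w z : z < 0 -> 0 < t_of w z.
Proof. by move=> z0; rewrite powR_gt0 // subr_gt0 expR_lt1. Qed.

Lemma t_of_lt1 w z : (0 < w)%N -> z < 0 -> t_of w z < 1.
Proof.
move=> w0 z0; apply: (@lt_le_trans _ _ (1 `^ (1 / w%:R))); last by rewrite powR1.
have ez : 0 < expR z by exact: expR_gt0.
by rewrite gt0_ltr_powR ?nnegrE ?divr_gt0 ?ltr0n ?subr_ge0 ?expR_le1 ?ltW // ltrBlDl ltrDr.
Qed.

Lemma t_of_expn w z : (0 < w)%N -> z < 0 -> t_of w z ^+ w = 1 - expR z.
Proof.
move=> w0 z0; rewrite -powR_mulrn ?powR_ge0 // /t_of -powRrM mul1r mulVf ?powRr1 //.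
  by rewrite subr_ge0 expR_le1 ltW.
by rewrite pnatr_eq0 -lt0n.
Qed.

Lemma s_of_sqr w z : (0 < w)%N -> z < 0 ->
  s_of w z ^+ 2 = t_of w z / (1 - t_of w z).
Proof.
move=> w0 z0; have t0 := t_of_gt0 w z0; have t1 := t_of_lt1 w0 z0.
by rewrite /s_of /chi div1r powR12_sqrt ?sqr_sqrtr // divr_ge0 ?subr_ge0 ?ltW.
Qed.

Lemma t_of_s_of w z : (0 < w)%N -> z < 0 ->
  t_of w z = s_of w z ^+ 2 / (1 + s_of w z ^+ 2).
Proof.
move=> w0 z0; have t1 : 1 - t_of w z != 0 by rewrite subr_eq0 gt_eqF ?t_of_lt1.
rewrite s_of_sqr //; field.
by rewrite t1 subrK oner_neq0.
Qed.

Lemma ler_odds (a b : R) : a <= b -> b < 1 -> a / (1 - a) <= b / (1 - b).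
Proof.
move=> ab b1; rewrite ler_pdivrMr ?subr_gt0 //; last lra.
by rewrite mulrAC ler_pdivlMr ?subr_gt0 //; nra.
Qed.

Lemma is_derive_g_expR w z : (0 < w)%N -> z < 0 ->
  is_derive z 1 (fun y => g w (expR y)) (slope w (s_of w z)).
Proof.
move=> w0 z0.
have t0 := t_of_gt0 w z0; have t1 := t_of_lt1 w0 z0.
have ez : 0 < expR z := expR_gt0 z.
have e0 : 0 < 1 - expR z by rewrite subr_gt0 expR_lt1.
have t1' : 0 < 1 - t_of w z by rewrite subr_gt0.
have o0 : 0 < t_of w z * (1 - t_of w z)^-1 by rewrite divr_gt0.
have dE := is_derive1B (is_derive1_cst 1 z) (is_derive_expR z).
have dT := is_derive1_comp_powR (1 / w%:R) dE e0.
have d1T := is_derive1B (is_derive1_cst 1 z) dT.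
have dO := is_derive1M dT (is_derive1V d1T (lt0r_neq0 t1')).
have dH := is_derive1M d1T (is_derive1B (is_derive1_cst psi z) (is_derive1_comp_powR chi dO o0)).
have dQ := is_derive1M dE (is_derive1V (is_derive_expR z) (lt0r_neq0 ez)).
apply: is_derive_eq (is_derive1M dQ dH) _.
rewrite -/(t_of w z) (powRB1 _ e0) -/(t_of w z) (powRB1 _ o0) -/(s_of w z).
(* With e^z = 1 - t^w, t = s^2/(1+s^2) and w = k+1 this becomes a rational
   identity in s, (1+s^2)^k and s^(2k). *)
have -> : expR z = 1 - t_of w z ^+ w by rewrite t_of_expn //; ring.
rewrite t_of_s_of //; have : 0 < s_of w z by exact: powR_gt0.
move: (s_of w z) => s s0; clear -w0 s0.
case: w w0 => // k _; have := pow_gap_gt0 s (ltn0Sn k).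
rewrite /slope /slope_num /slope_den /pow_gap /psi /chi succnK expr_div_n !(exprS _ k).
have s2 : 0 < s ^+ 2 by rewrite exprn_gt0.
have a0 : 0 < (1 + s ^+ 2) ^+ k by rewrite exprn_gt0 // addr_gt0.
have b0 : 0 < (s ^+ 2) ^+ k by rewrite exprn_gt0.
have k0 : 0 <= k%:R :> R by exact: ler0n.
by move=> gap0; field; rewrite !gt_eqF //; nra.
Qed.

Lemma t_of_le_half w z : (0 < w)%N -> ln (1 - (1 / 2%:R) ^+ w) <= z -> z < 0 ->
  t_of w z <= 1 / 2%:R.
Proof.
move=> w0 az z0; have /andP[h0 h1] := half_expn_gt0_lt1 w0.
have : expR (ln (1 - (1 / 2%:R) ^+ w)) <= expR z by rewrite ler_expR.
rewrite lnK ?posrE ?subr_gt0 // => ez.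
have t0 := ltW (t_of_gt0 w z0).
rewrite -(ler_pXn2r w0) ?nnegrE ?t_of_expn //; lra.
Qed.

Lemma s_of_le1 w z : (0 < w)%N -> ln (1 - (1 / 2%:R) ^+ w) <= z -> z < 0 ->
  s_of w z <= 1.
Proof.
move=> w0 az z0; have t0 := t_of_gt0 w z0; have th := t_of_le_half w0 az z0.
have o1 : t_of w z / (1 - t_of w z) <= 1 by rewrite ler_pdivrMr ?mul1r; lra.
have o0 : 0 <= t_of w z / (1 - t_of w z) by rewrite divr_ge0 //; lra.
have := ge0_ler_powR chi_ge0 (x := t_of w z / (1 - t_of w z)) (y := 1).
by rewrite !nnegrE powR1; apply.
Qed.

Lemma s_of_antitone w z1 z2 : (0 < w)%N -> z1 <= z2 -> z2 < 0 ->
  s_of w z2 <= s_of w z1.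
Proof.
move=> w0 z12 z2_lt0; have z1_lt0 := le_lt_trans z12 z2_lt0.
have e2 : 0 <= 1 - expR z2 by rewrite subr_ge0 expR_le1 ltW.
have e12 : 1 - expR z2 <= 1 - expR z1 by rewrite lerD2l lerN2 ler_expR.
have t12 : t_of w z2 <= t_of w z1.
  by apply: ge0_ler_powR; rewrite ?nnegrE ?divr_ge0 // (le_trans e2 e12).
have odds_ge0 z : z < 0 -> 0 <= t_of w z / (1 - t_of w z).
  by move=> z0; rewrite divr_ge0 ?subr_ge0 ?ltW ?t_of_gt0 ?t_of_lt1.
rewrite /s_of; apply: ge0_ler_powR; rewrite ?nnegrE ?ler_odds ?odds_ge0 ?t_of_lt1 ?chi_ge0 //.
Qed.

Lemma g_expR_bounds w (z : R) : (0 < w)%N ->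
  ln (1 - (1 / 2%:R) ^+ w) <= z -> z < 0 ->
  0 <= g w (expR z) <= psi * ((1 - expR z) / expR z).
Proof.
move=> w0 az z0.
have t0 := t_of_gt0 w z0; have t1 := t_of_lt1 w0 z0.
have s0 : 0 <= s_of w z := powR_ge0 _ _; have s1 := s_of_le1 w0 az z0.
have q0 : 0 <= (1 - expR z) / expR z by rewrite divr_ge0 ?expR_ge0 // subr_ge0 expR_le1 ltW.
have h0 : 0 <= (1 - t_of w z) * (psi - s_of w z) by rewrite mulr_ge0 /psi; lra.
have h1 : (1 - t_of w z) * (psi - s_of w z) <= psi by rewrite /psi; nra.
by rewrite /g /h -/(t_of w z) -/(s_of w z) mulr_ge0 //= mulrC ler_wpM2r.
Qed.

Lemma g_expR_cvg0_left w : (0 < w)%N -> g w (expR z) @[z --> (0 : R)^'-] --> 0.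
Proof.
move=> w0; have a0 := ln_one_sub_half_expn_lt0 w0.
have q_cvg : psi * ((1 - expR z) / expR z) @[z --> (0 : R)^'-] --> 0.
  have [dq _] := is_derive1M (is_derive1_cst psi (0 : R))
    (is_derive1M (is_derive1B (is_derive1_cst 1 0) (is_derive_expR (0 : R)))
       (is_derive1V (is_derive_expR (0 : R)) (lt0r_neq0 (expR_gt0 (0 : R))))).
  have := cvg_at_left_filter (differentiable_continuous ((derivable1_diffP _ _).1 dq)).
  by rewrite expR0 subrr mul0r mulr0.
apply: (squeeze_cvgr _ (cvg_cst 0) q_cvg).
near=> z; apply: g_expR_bounds; first exact: w0.
- by apply: ltW; near: z; exact: nbhs_left_gt a0.
- by near: z; exact: nbhs_left_lt.
Unshelve. all: by end_near.
Qed.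

Lemma continuous_g_expR w : (0 < w)%N ->
  {within `[ln (1 - (1 / 2%:R) ^+ w), 0], continuous (fun z : R => g w (expR z))}.
Proof.
move=> w0; have a0 := ln_one_sub_half_expn_lt0 w0.
have cont_lt0 z : z < 0 -> {for z, continuous (fun z : R => g w (expR z))}.
  move=> z0; have [dz _] := is_derive_g_expR w0 z0.
  exact/differentiable_continuous/derivable1_diffP.
apply/continuous_within_itvP => //; split.
- by move=> z; rewrite in_itv /= => /andP[_ /cont_lt0].
- exact/cvg_at_right_filter/cont_lt0.
- by rewrite expR0 /g subrr !mul0r; exact: g_expR_cvg0_left.
Qed.
Lemma slope_s_of_nonincr w : (1 <= w <= 5)%N ->
  {in `]ln (1 - (1 / 2%:R) ^+ w), 0[%R &,
    {homo (fun z => slope w (s_of w z)) : z1 z2 /~ z1 <= z2}}.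
Proof.
move=> w15; have w0 : (0 < w)%N by case/andP: w15.
move=> z1 z2; rewrite !in_itv /= => /andP[_ z1_lt0] /andP[az2 _] z21.
have z2_lt0 := le_lt_trans z21 z1_lt0.
have s2_le1 := s_of_le1 w0 (ltW az2) z2_lt0.
have s12 := s_of_antitone w0 z21 z1_lt0.
have s1_in : s_of w z1 \in `[0, 1]%R by rewrite in_itv /= powR_ge0 (le_trans s12).
have s2_in : s_of w z2 \in `[0, 1]%R by rewrite in_itv /= powR_ge0.
exact: slope_nondecr w15 _ _ s1_in s2_in s12.
Qed.
End GExpR.

Theorem lemma39 (R : realType) (w : nat) :
  (1 <= w <= 5)%N ->
  concave_on (fun z : R => g w (expR z)) (ln (1 - (1 / 2%:R) ^+ w)) 0.
Proof.
move=> w15; have w0 : (0 < w)%N by case/andP: w15.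
apply: concave_on_nonincr_deriv _ (slope_s_of_nonincr w15) (continuous_g_expR w0).
by move=> z; rewrite in_itv /= => /andP[_ z0]; exact: is_derive_g_expR.
Qed.
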